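(* Assume $\Lambda>0$ and let $(g,K,F,E,u,\Theta,\rho,e)$ be a $C^1$ solution of the evolution system (S) on an interval $[0,T)$, with $g$ positive definite, $\rho>0$, $e\ge0$, $\Theta^{00}\ge0$, satisfying the constraints (C1)–(C4) for all $t$, and with $H(0)<0$. Then for all $t\in[0,T)$: $\frac{dH}{dt}\ge K_{ij}K^{ij}-\Lambda\ge\frac13H^2-\Lambda\ge0$, and $$H(0)-\Lambda t\le H(t)<-\sqrt{3\Lambda}.$$
   Context: Setting. $G$ is a three-dimensional connected Lie group of Bianchi type I–VIII, $(e_i)_{i=1,2,3}$ a left-invariant frame with structure constants $C^k_{ij}$ defined by $[e_i,e_j]=C^k_{ij}e_k$ (so $C^k_{ij}=-C^k_{ji}$ and the Jacobi identity holds). $\Lambda\in\mathbb{R}$ is a constant. Latin indices run over $1,2,3$; repeated indices are summed. Unknowns (functions of $t$): a symmetric positive definite matrix $g=(g_{ij})$ with inverse $(g^{ij})$; a symmetric matrix $K=(K_{ij})$; an antisymmetric matrix $F=(F_{ij})$; vectors $E=(E^i)$, $u=(u^i)$; $\Theta=(\Theta^{00},\Theta^{0i})$; a function $\rho>0$; a function $e\ge0$. Derived quantities: $u^0=\sqrt{1+g_{ij}u^iu^j}$, $u_i=g_{ij}u^j$; $H=g^{ij}K_{ij}$; $K^i_j=g^{ik}K_{kj}$, $K^{ij}=g^{ik}g^{jl}K_{kl}$; $F^{ij}=g^{ik}g^{jl}F_{kl}$; $\gamma^l_{ij}=\tfrac12 g^{lk}(-C^m_{jk}g_{im}+C^m_{ki}g_{jm}+C^m_{ij}g_{km})$;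 $R_{ij}=\gamma^l_{lm}\gamma^m_{ji}-\gamma^m_{jl}\gamma^l_{mi}-C^l_{mj}\gamma^m_{li}$, $R=g^{ij}R_{ij}$; $\tau_{00}=\tfrac12 g_{ij}E^iE^j+\tfrac14 g^{ik}g^{jl}F_{kl}F_{ij}$, $\tau_{0j}=-E^kF_{jk}$, $\tau_{ij}=(\tfrac12 g_{ij}g_{kl}-g_{ik}g_{jl})E^kE^l-\tfrac14 g_{ij}g^{km}g^{nl}F_{kl}F_{mn}+g^{kl}F_{ik}F_{jl}$; $\Theta_{00}=\Theta^{00}$, $\Theta_{0j}=-g_{jk}\Theta^{0k}$; $T_{00}=\tfrac43\rho(u^0)^2+\Theta_{00}$, $T_{0j}=-\tfrac43\rho u^0u_j+\Theta_{0j}$, $T_{ij}=\tfrac43\rho u_iu_j+\tfrac13\rho g_{ij}$; $\nabla$ is the Levi-Civita connection of the left-invariant metric $g$, so for left-invariant tensors $\nabla_kK_{ij}=-\gamma^l_{ki}K_{lj}-\gamma^l_{kj}K_{il}$ and $\nabla^iK_{ij}=g^{ik}\nabla_kK_{ij}$. Evolution system (S) (dot $=d/dt$): $\dot g_{ij}=-2K_{ij}$; $\dot K_{ij}=R_{ij}+HK_{ij}-2K^l_jK_{il}-8\pi(\tau_{ij}+T_{ij})+4\pi(-T_{00}+g^{lm}T_{lm})g_{ij}-\Lambda g_{ij}$; $\dot F_{ij}=C^k_{ij}g_{kl}E^l$; $\dot E^i=HE^i-C^j_{jk}E^k\frac{u^i}{u^0}-C^j_{jk}g^{kl}g^{im}F_{lm}-\tfrac12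 C^i_{jk}g^{jl}g^{km}F_{lm}$; $\dot u^i=2K^i_ju^j-\gamma^i_{jk}\frac{u^ju^k}{u^0}+\frac{3}{4\rho u^0}C^j_{jk}E^kE^i-\frac{3}{4\rho(u^0)^2}C^j_{jk}E^kg^{il}F_{ml}u^m$; $\dot\Theta^{00}=H\Theta^{00}-C^i_{ij}\Theta^{0j}+\tfrac13\rho H+\rho u^0$; $\dot\Theta^{0i}=H\Theta^{0i}+2K^i_j\Theta^{0j}-\tfrac{\rho}{3}(C^k_{kj}g^{ij}+\gamma^i_{jk}g^{jk})+\rho u^i$; $\dot\rho=-\big(\frac{3}{4u^0}+K_{ij}\frac{u^iu^j}{(u^0)^2}-H+C^i_{ij}\frac{u^j}{u^0}\big)\rho-\tfrac34 g_{il}C^j_{jk}E^kE^l\frac{u^i}{(u^0)^3}$; $\dot e=-\big(K_{ij}\frac{u^iu^j}{(u^0)^2}+C^i_{ik}\frac{u^k}{u^0}-H\big)e+\tfrac34 g_{ij}\frac{u^iE^j}{(u^0)^2}\frac{e^2}{\rho}$. Constraints: (C1) $R-K_{ij}K^{ij}+H^2=16\pi(\tau_{00}+T_{00})+2\Lambda$; (C2) $\nabla^iK_{ij}=-8\pi(\tau_{0j}+T_{0j})$; (C3) $C^l_{ij}F_{kl}+C^l_{jk}F_{il}+C^l_{ki}F_{jl}=0$; (C4) $C^i_{ik}E^k+eu^0=0$. For Bianchi types I–VIII the scalar curvature satisfies $R\le0$. *)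

From Stdlib Require Import Reals Lra Lia.
Open Scope R_scope.

(* Indices run over 0,1,2 (standing for 1,2,3 in the paper). *)
Definition sum3 (f : nat -> R) : R := f 0%nat + f 1%nat + f 2%nat.
Definition Mat := nat -> nat -> R.
Definition Vec := nat -> R.

(* Structure constants: SC k i j = C^k_{ij}, with [e_i,e_j] = C^k_{ij} e_k. *)
Definition SC := nat -> nat -> nat -> R.

Definition det3 (g : Mat) : R :=
  g 0%nat 0%nat * (g 1%nat 1%nat * g 2%nat 2%nat - g 1%nat 2%nat * g 2%nat 1%nat)
  - g 0%nat 1%nat * (g 1%nat 0%nat * g 2%nat 2%nat - g 1%nat 2%nat * g 2%nat 0%nat)
  + g 0%nat 2%nat * (g 1%nat 0%nat * g 2%nat 1%nat - g 1%nat 1%nat * g 2%nat 0%nat).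

(* inverse matrix via the adjugate (cyclic cofactor formula) *)
Definition inv3 (g : Mat) : Mat := fun i j =>
  let a := ((j + 1) mod 3)%nat in let b := ((j + 2) mod 3)%nat in
  let c := ((i + 1) mod 3)%nat in let d := ((i + 2) mod 3)%nat in
  (g a c * g b d - g a d * g b c) / det3 g.

Definition nonzero3 (x : Vec) : Prop := exists i, (i < 3)%nat /\ x i <> 0.
Definition quad3 (m : Mat) (x : Vec) : R :=
  sum3 (fun i => sum3 (fun j => m i j * x i * x j)).
Definition symmetric3 (m : Mat) : Prop :=
  forall i j, (i < 3)%nat -> (j < 3)%nat -> m i j = m j i.
Definition antisymmetric3 (m : Mat) : Prop :=
  forall i j, (i < 3)%nat -> (j < 3)%nat -> m i j = - m j i.
Definition posdef3 (m : Mat) : Prop :=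
  symmetric3 m /\ forall x, nonzero3 x -> quad3 m x > 0.
Definition definite3 (m : Mat) : Prop :=
  (forall x, nonzero3 x -> quad3 m x > 0) \/ (forall x, nonzero3 x -> quad3 m x < 0).

Definition levi (i j k : nat) : R :=
  match i, j, k with
  | O, S O, S (S O) => 1 | S O, S (S O), O => 1 | S (S O), O, S O => 1
  | O, S (S O), S O => -1 | S (S O), S O, O => -1 | S O, O, S (S O) => -1
  | _, _, _ => 0 end.

Definition lie_structure (C : SC) : Prop :=
  (forall k i j, (k < 3)%nat -> (i < 3)%nat -> (j < 3)%nat -> C k i j = - C k j i) /\
  (forall i j k m, (i < 3)%nat -> (j < 3)%nat -> (k < 3)%nat -> (m < 3)%nat ->
     sum3 (fun l => C l i j * C m l k + C l j k * C m l i + C l k i * C m l j) = 0).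

(* Ellis-MacCallum decomposition C^k_{ij} = eps_{ijl} n^{lk} + delta^k_j a_i - delta^k_i a_j:
   a_i = 1/2 C^j_{ij};  in class A (a = 0), n^{lk} = 1/2 eps_{ijl} C^k_{ij}. *)
Definition bianchi_a (C : SC) (i : nat) : R := / 2 * sum3 (fun j => C j i j).
Definition bianchi_n (C : SC) : Mat := fun l k =>
  / 2 * sum3 (fun i => sum3 (fun j => levi i j l * C k i j)).

Definition bianchi_IX (C : SC) : Prop :=
  (forall i, (i < 3)%nat -> bianchi_a C i = 0) /\ definite3 (bianchi_n C).

Definition bianchi_I_VIII (C : SC) : Prop := lie_structure C /\ ~ bianchi_IX C.

Record State := mkState {
  sg : Mat; sK : Mat; sF : Mat; sE : Vec; su : Vec;
  sTh00 : R; sTh0 : Vec; srho : R; se : R }.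

Section Derived.
Variables (C : SC) (Lam : R) (s : State).

Definition gi : Mat := inv3 (sg s).
Definition u0 : R := sqrt (1 + quad3 (sg s) (su s)).
Definition ulow (i : nat) : R := sum3 (fun j => sg s i j * su s j).
Definition Htr : R := sum3 (fun i => sum3 (fun j => gi i j * sK s i j)).
Definition Kmix (i j : nat) : R := sum3 (fun k => gi i k * sK s k j).
Definition Kup (i j : nat) : R :=
  sum3 (fun k => sum3 (fun l => gi i k * gi j l * sK s k l)).
Definition KK : R := sum3 (fun i => sum3 (fun j => sK s i j * Kup i j)).
Definition gam (l i j : nat) : R :=
  / 2 * sum3 (fun k => gi l k *
     (- sum3 (fun m => C m j k * sg s i m)
      + sum3 (fun m => C m k i * sg s j m)
      + sum3 (fun m => C m i j * sg s k m))).
Definition Ric (i j : nat) : R :=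
  sum3 (fun l => sum3 (fun m =>
     gam l l m * gam m j i - gam m j l * gam l m i - C l m j * gam m l i)).
Definition Rscal : R := sum3 (fun i => sum3 (fun j => gi i j * Ric i j)).

Definition tau00 : R :=
  / 2 * quad3 (sg s) (sE s)
  + / 4 * sum3 (fun i => sum3 (fun j => sum3 (fun k => sum3 (fun l =>
        gi i k * gi j l * sF s k l * sF s i j)))).
Definition tau0 (j : nat) : R := - sum3 (fun k => sE s k * sF s j k).
Definition tauij (i j : nat) : R :=
  sum3 (fun k => sum3 (fun l =>
     (/ 2 * sg s i j * sg s k l - sg s i k * sg s j l) * sE s k * sE s l))
  - / 4 * sg s i j * sum3 (fun k => sum3 (fun m => sum3 (fun n => sum3 (fun l =>
        gi k m * gi n l * sF s k l * sF s m n))))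
  + sum3 (fun k => sum3 (fun l => gi k l * sF s i k * sF s j l)).

Definition Thlow00 : R := sTh00 s.
Definition Thlow0 (j : nat) : R := - sum3 (fun k => sg s j k * sTh0 s k).
Definition T00 : R := 4 / 3 * srho s * u0 ^ 2 + Thlow00.
Definition T0 (j : nat) : R := - (4 / 3) * srho s * u0 * ulow j + Thlow0 j.
Definition Tij (i j : nat) : R :=
  4 / 3 * srho s * ulow i * ulow j + / 3 * srho s * sg s i j.

(* nabla_k K_ij for left-invariant K, and nabla^i K_ij *)
Definition nablaK (k i j : nat) : R :=
  - sum3 (fun l => gam l k i * sK s l j) - sum3 (fun l => gam l k j * sK s i l).
Definition divK (j : nat) : R :=
  sum3 (fun i => sum3 (fun k => gi i k * nablaK k i j)).

Definition trC (k : nat) : R := sum3 (fun j => C j j k).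
Definition trCE : R := sum3 (fun k => trC k * sE s k).

Definition rhs_g (i j : nat) : R := - 2 * sK s i j.
Definition rhs_K (i j : nat) : R :=
  Ric i j + Htr * sK s i j - 2 * sum3 (fun l => Kmix l j * sK s i l)
  - 8 * PI * (tauij i j + Tij i j)
  + 4 * PI * (- T00 + sum3 (fun l => sum3 (fun m => gi l m * Tij l m))) * sg s i j
  - Lam * sg s i j.
Definition rhs_F (i j : nat) : R :=
  sum3 (fun k => sum3 (fun l => C k i j * sg s k l * sE s l)).
Definition rhs_E (i : nat) : R :=
  Htr * sE s i - trCE * su s i / u0
  - sum3 (fun k => sum3 (fun l => sum3 (fun m => trC k * gi k l * gi i m * sF s l m)))
  - / 2 * sum3 (fun j => sum3 (fun k => sum3 (fun l => sum3 (fun m =>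
        C i j k * gi j l * gi k m * sF s l m)))).
Definition rhs_u (i : nat) : R :=
  2 * sum3 (fun j => Kmix i j * su s j)
  - sum3 (fun j => sum3 (fun k => gam i j k * su s j * su s k)) / u0
  + 3 / (4 * srho s * u0) * trCE * sE s i
  - 3 / (4 * srho s * u0 ^ 2) * trCE
      * sum3 (fun l => sum3 (fun m => gi i l * sF s m l * su s m)).
Definition rhs_Th00 : R :=
  Htr * sTh00 s - sum3 (fun i => sum3 (fun j => C i i j * sTh0 s j))
  + / 3 * srho s * Htr + srho s * u0.
Definition rhs_Th0 (i : nat) : R :=
  Htr * sTh0 s i + 2 * sum3 (fun j => Kmix i j * sTh0 s j)
  - srho s / 3 * (sum3 (fun j => sum3 (fun k => C k k j * gi i j))
                  + sum3 (fun j => sum3 (fun k => gam i j k * gi j k)))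
  + srho s * su s i.
Definition KuuN : R :=
  sum3 (fun i => sum3 (fun j => sK s i j * su s i * su s j)) / u0 ^ 2.
Definition Cu : R := sum3 (fun i => sum3 (fun j => C i i j * su s j)) / u0.
Definition rhs_rho : R :=
  - (3 / (4 * u0) + KuuN - Htr + Cu) * srho s
  - 3 / 4 * sum3 (fun i => sum3 (fun l => sg s i l * trCE * sE s l * su s i)) / u0 ^ 3.
Definition rhs_e : R :=
  - (KuuN + Cu - Htr) * se s
  + 3 / 4 * sum3 (fun i => sum3 (fun j => sg s i j * su s i * sE s j)) / u0 ^ 2
      * (se s ^ 2 / srho s).

Definition constraint_C1 : Prop := Rscal - KK + Htr ^ 2 = 16 * PI * (tau00 + T00) + 2 * Lam.
Definition constraint_C2 : Prop := forall j, (j < 3)%nat -> divK j = - 8 * PI * (tau0 j + T0 j).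
Definition constraint_C3 : Prop := forall i j k, (i < 3)%nat -> (j < 3)%nat -> (k < 3)%nat ->
  sum3 (fun l => C l i j * sF s k l + C l j k * sF s i l + C l k i * sF s j l) = 0.
Definition constraint_C4 : Prop := sum3 (fun i => sum3 (fun k => C i i k * sE s k)) + se s * u0 = 0.

End Derived.

Definition in_dom (T : option R) (t : R) : Prop :=
  0 <= t /\ match T with Some T' => t < T' | None => True end.

Definition deriv_on (T : option R) (f f' : R -> R) : Prop :=
  forall t, in_dom T t -> forall eps, eps > 0 -> exists delta, delta > 0 /\
    forall h, h <> 0 -> Rabs h < delta -> in_dom T (t + h) ->
      Rabs ((f (t + h) - f t) / h - f' t) < eps.

Definition cont_on (T : option R) (f : R -> R) : Prop :=
  forall t, in_dom T t -> forall eps, eps > 0 -> exists delta, delta > 0 /\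
    forall t', in_dom T t' -> Rabs (t' - t) < delta -> Rabs (f t' - f t) < eps.

Definition C1_with (T : option R) (f f' : R -> R) : Prop :=
  deriv_on T f f' /\ cont_on T f'.

Definition solves_S (C : SC) (Lam : R) (T : option R) (x : R -> State) : Prop :=
  (forall i j, (i < 3)%nat -> (j < 3)%nat ->
     C1_with T (fun t => sg (x t) i j) (fun t => rhs_g (x t) i j) /\
     C1_with T (fun t => sK (x t) i j) (fun t => rhs_K C Lam (x t) i j) /\
     C1_with T (fun t => sF (x t) i j) (fun t => rhs_F C (x t) i j)) /\
  (forall i, (i < 3)%nat ->
     C1_with T (fun t => sE (x t) i) (fun t => rhs_E C (x t) i) /\
     C1_with T (fun t => su (x t) i) (fun t => rhs_u C (x t) i) /\
     C1_with T (fun t => sTh0 (x t) i) (fun t => rhs_Th0 C (x t) i)) /\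
  C1_with T (fun t => sTh00 (x t)) (fun t => rhs_Th00 C (x t)) /\
  C1_with T (fun t => srho (x t)) (fun t => rhs_rho C (x t)) /\
  C1_with T (fun t => se (x t)) (fun t => rhs_e C (x t)).

(* The Hamiltonian constraint (C1) eliminates the scalar curvature from the trace of
   the evolution equation for [K]:
     dH/dt = K_ij K^ij + 8 pi tau00 + 4 pi (T00 + g^ij T_ij) - Lam >= K_ij K^ij - Lam,
   and K_ij K^ij >= H^2 / 3 by Cauchy-Schwarz in a g-orthonormal frame.  The same
   constraint gives H^2 = K_ij K^ij - R + 16 pi (tau00 + T00) + 2 Lam > H^2 / 3 + 2 Lam
   because R <= 0: in the Ellis-MacCallum decomposition
     R = - (tr((g n)^2) - 1/2 (tr (g n))^2) / det g - 6 a^T g^-1 a,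
   and the first term is nonpositive as soon as the quadratic form of [n] has a
   nonzero null vector, which is the case for every Bianchi type except IX.  Hence
   H^2 > 3 Lam throughout, so H is nondecreasing and can never reach -sqrt(3 Lam). *)

From Stdlib Require Import Reals Lra Lia Classical Ranalysis5.
Open Scope R_scope.

(** * Positive definite 3x3 matrices *)

Ltac expand3 := unfold sum3; cbn [Nat.add Nat.modulo Nat.divmod Nat.sub fst snd levi].
Ltac destruct3 i := destruct i as [|[|[|i]]]; [| | |lia].
Ltac sym3 H := rewrite ?(H 1%nat 0%nat), ?(H 2%nat 0%nat), ?(H 2%nat 1%nat) by lia.
Ltac sym3_in H H' := rewrite ?(H 1%nat 0%nat), ?(H 2%nat 0%nat), ?(H 2%nat 1%nat) in H' by lia.

Definition v3 (a b c : R) : Vec := fun i => match i with O => a | S O => b | _ => c end.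
Definition gram (E : Mat) : Mat := fun i j => sum3 (fun a => E a i * E a j).
Definition mx_conj (Q M : Mat) : Mat := fun a b => sum3 (fun i => sum3 (fun j => Q i a * M i j * Q j b)).
Definition inv_trace (g M : Mat) : R := sum3 (fun i => sum3 (fun j => inv3 g i j * M i j)).
Definition inv_frob (g M : Mat) : R :=
  sum3 (fun i => sum3 (fun j => sum3 (fun k => sum3 (fun l =>
    inv3 g i k * inv3 g j l * M k l * M i j)))).

Lemma sum3_sq_nonneg (f : nat -> nat -> R) : 0 <= sum3 (fun a => sum3 (fun b => f a b ^ 2)).
Proof. unfold sum3. repeat apply Rplus_le_le_0_compat; apply pow2_ge_0. Qed.

Lemma nonzero3_dec (v : Vec) : nonzero3 v \/ (v 0%nat = 0 /\ v 1%nat = 0 /\ v 2%nat = 0).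
Proof.
  destruct (Req_dec (v 0%nat) 0) as [h0|h0]; [destruct (Req_dec (v 1%nat) 0) as [h1|h1];
    [destruct (Req_dec (v 2%nat) 0) as [h2|h2]|]|].
  - right; auto.
  - left; exists 2%nat; split; [lia|auto].
  - left; exists 1%nat; split; [lia|auto].
  - left; exists 0%nat; split; [lia|auto].
Qed.

Lemma quad3_ext m v w : (forall k, (k < 3)%nat -> v k = w k) -> quad3 m v = quad3 m w.
Proof. intros H. unfold quad3, sum3. rewrite !H by lia. reflexivity. Qed.

Lemma quad3_v3 g a b c : symmetric3 g -> quad3 g (v3 a b c) =
  g 0%nat 0%nat * a * a + g 1%nat 1%nat * b * b + g 2%nat 2%nat * c * c
  + 2 * (g 0%nat 1%nat * a * b + g 0%nat 2%nat * a * c + g 1%nat 2%nat * b * c).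
Proof. intro Hs. unfold quad3, v3. expand3. sym3 Hs. ring. Qed.

Lemma posdef3_quad3_nonneg g v : posdef3 g -> 0 <= quad3 g v.
Proof.
  intros [Hs Hq]. destruct (nonzero3_dec v) as [Hv|[h0 [h1 h2]]].
  - now apply Rlt_le, Hq.
  - unfold quad3; expand3. rewrite h0, h1, h2. lra.
Qed.

Ltac nonzero3_at k := exists k; split; [lia|simpl; lra].

(* The form takes the values [a], [a (a d - b^2)] and [(a d - b^2) det g] at [e_0],
   at [(-b, a, 0)] and at the last column of the adjugate of [g]. *)
Lemma posdef3_leading_minors g : posdef3 g ->
  0 < g 0%nat 0%nat /\ 0 < g 0%nat 0%nat * g 1%nat 1%nat - g 0%nat 1%nat * g 0%nat 1%nat /\ 0 < det3 g.
Proof.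
  intros [Hs Hq].
  set (a := g 0%nat 0%nat). set (b := g 0%nat 1%nat). set (c := g 0%nat 2%nat).
  set (d := g 1%nat 1%nat). set (e := g 1%nat 2%nat). set (f := g 2%nat 2%nat).
  assert (Ha : 0 < a).
  { pose proof (Hq (v3 1 0 0) ltac:(nonzero3_at 0%nat)) as H.
    rewrite quad3_v3 in H by exact Hs. fold a b c d e f in H. lra. }
  assert (Hm : 0 < a * d - b * b).
  { pose proof (Hq (v3 (- b) a 0) ltac:(nonzero3_at 1%nat)) as H.
    rewrite quad3_v3 in H by exact Hs. fold a b c d e f in H. nra. }
  split; [exact Ha|split; [exact Hm|]].
  pose proof (Hq (v3 (b * e - c * d) (b * c - a * e) (a * d - b * b)) ltac:(nonzero3_at 2%nat)) as H.
  rewrite quad3_v3 in H by exact Hs. fold a b c d e f in H.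
  replace (det3 g) with (a * (d * f - e * e) - b * (b * f - e * c) + c * (b * e - d * c))
    by (unfold det3; sym3 Hs; reflexivity).
  nra.
Qed.

(* Cholesky: [g = E^T E] with [E] upper triangular. *)
Lemma gram_of_leading_minors g : symmetric3 g ->
  0 < g 0%nat 0%nat -> 0 < g 0%nat 0%nat * g 1%nat 1%nat - g 0%nat 1%nat * g 0%nat 1%nat -> 0 < det3 g ->
  exists E, (forall i j, (i < 3)%nat -> (j < 3)%nat -> g i j = gram E i j) /\ 0 < det3 E.
Proof.
  intros Hs.
  set (a := g 0%nat 0%nat). set (b := g 0%nat 1%nat). set (c := g 0%nat 2%nat).
  set (d := g 1%nat 1%nat). set (e := g 1%nat 2%nat). set (f := g 2%nat 2%nat).
  set (m := a * d - b * b). intros Ha Hm Hdet.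
  set (r1 := m / a). set (e12 := e - b * c / a).
  assert (Hr1 : 0 < r1) by (apply Rdiv_pos_pos; lra).
  assert (Hr2 : 0 < det3 g / m) by (apply Rdiv_pos_pos; lra).
  set (sa := sqrt a). set (s1 := sqrt r1). set (s2 := sqrt (det3 g / m)).
  assert (Hsa : sa * sa = a) by (apply sqrt_sqrt; lra).
  assert (Hs1 : s1 * s1 = r1) by (apply sqrt_sqrt; lra).
  assert (Hs2 : s2 * s2 = det3 g / m) by (apply sqrt_sqrt; lra).
  assert (Psa : 0 < sa) by (apply sqrt_lt_R0; lra).
  assert (Ps1 : 0 < s1) by (apply sqrt_lt_R0; lra).
  assert (Ps2 : 0 < s2) by (apply sqrt_lt_R0; lra).
  assert (Ed : d = s1 * s1 + b * b / a) by (rewrite Hs1; unfold r1, m; field; lra).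
  assert (Ef : f = s2 * s2 + c * c / a + e12 * e12 / r1).
  { rewrite Hs2. unfold det3, e12, r1, m in *. sym3 Hs. fold a b c d e f. field. lra. }
  exists (fun i j => match i, j with
    | O, O => sa | O, S O => b / sa | O, S (S O) => c / sa
    | S O, S O => s1 | S O, S (S O) => e12 / s1
    | S (S O), S (S O) => s2 | _, _ => 0 end).
  split.
  - intros i j Hi Hj. unfold gram. expand3.
    destruct3 i; destruct3 j; cbn; sym3 Hs; fold a b c d e f.
    all: rewrite ?Ed, ?Ef; unfold e12; rewrite <- ?Hs1, <- ?Hsa; field; lra.
  - unfold det3. cbn. ring_simplify. repeat apply Rmult_lt_0_compat; lra.
Qed.

Lemma posdef3_gram g : posdef3 g ->
  exists E, (forall i j, (i < 3)%nat -> (j < 3)%nat -> g i j = gram E i j) /\ 0 < det3 E.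
Proof.
  intros Hp. destruct (posdef3_leading_minors g Hp) as (Ha & Hm & Hd).
  exact (gram_of_leading_minors g (proj1 Hp) Ha Hm Hd).
Qed.

Lemma det3_gram E : det3 (gram E) = det3 E * det3 E.
Proof. unfold det3, gram. expand3. ring. Qed.

Lemma inv3_gram E : det3 E <> 0 -> forall i j, (i < 3)%nat -> (j < 3)%nat ->
  inv3 (gram E) i j = sum3 (fun a => inv3 E i a * inv3 E j a).
Proof.
  intros HE i j Hi Hj. unfold inv3 at 1. rewrite det3_gram.
  unfold inv3, gram; unfold det3 in *; destruct3 i; destruct3 j; expand3; field; auto.
Qed.

Lemma inv3_mul_l E : det3 E <> 0 -> forall i k, (i < 3)%nat -> (k < 3)%nat ->
  sum3 (fun a => inv3 E i a * E a k) = if Nat.eqb i k then 1 else 0.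
Proof.
  intros HE i k Hi Hk. unfold inv3; unfold det3 in *; destruct3 i; destruct3 k; expand3; cbn; field; auto.
Qed.

Lemma inv3_ext g h : (forall i j, (i < 3)%nat -> (j < 3)%nat -> g i j = h i j) ->
  forall i j, (i < 3)%nat -> (j < 3)%nat -> inv3 g i j = inv3 h i j.
Proof.
  intros H i j Hi Hj. unfold inv3, det3.
  destruct3 i; destruct3 j; cbn [Nat.add Nat.modulo Nat.divmod Nat.sub fst snd]; rewrite !H by lia; reflexivity.
Qed.

Lemma posdef3_det_pos g : posdef3 g -> 0 < det3 g.
Proof. intros Hp. apply (posdef3_leading_minors g Hp). Qed.

Lemma posdef3_inv3_factor g : posdef3 g ->
  exists Q, forall i j, (i < 3)%nat -> (j < 3)%nat -> inv3 g i j = sum3 (fun a => Q i a * Q j a).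
Proof.
  intros Hp. destruct (posdef3_gram g Hp) as [E [HE Hd]]. exists (inv3 E).
  intros i j Hi Hj. rewrite (inv3_ext g (gram E) HE) by auto. apply inv3_gram; auto; lra.
Qed.

Lemma inv_frob_conj g Q M :
  (forall i j, (i < 3)%nat -> (j < 3)%nat -> inv3 g i j = sum3 (fun a => Q i a * Q j a)) ->
  inv_frob g M = sum3 (fun a => sum3 (fun b => mx_conj Q M a b ^ 2)).
Proof. intros HQ. unfold inv_frob. expand3. rewrite !HQ by lia. unfold mx_conj. expand3. ring. Qed.

Lemma inv_trace_conj g Q M :
  (forall i j, (i < 3)%nat -> (j < 3)%nat -> inv3 g i j = sum3 (fun a => Q i a * Q j a)) ->
  inv_trace g M = sum3 (fun a => mx_conj Q M a a).
Proof. intros HQ. unfold inv_trace. expand3. rewrite !HQ by lia. unfold mx_conj. expand3. ring. Qed.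

Lemma mx_conj_symmetric Q M : symmetric3 M -> symmetric3 (mx_conj Q M).
Proof. intros HM i j Hi Hj. unfold mx_conj. expand3. sym3 HM. ring. Qed.

Lemma symmetric3_sq_ge_trace_sq m : symmetric3 m ->
  sum3 (fun a => sum3 (fun b => m a b ^ 2)) >= / 3 * sum3 (fun a => m a a) ^ 2.
Proof.
  intros Hm. expand3. sym3 Hm.
  assert (0 <= (m 0%nat 0%nat - m 1%nat 1%nat) ^ 2) by apply pow2_ge_0.
  assert (0 <= (m 1%nat 1%nat - m 2%nat 2%nat) ^ 2) by apply pow2_ge_0.
  assert (0 <= (m 0%nat 0%nat - m 2%nat 2%nat) ^ 2) by apply pow2_ge_0.
  assert (0 <= m 1%nat 0%nat ^ 2) by apply pow2_ge_0.
  assert (0 <= m 2%nat 0%nat ^ 2) by apply pow2_ge_0.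
  assert (0 <= m 2%nat 1%nat ^ 2) by apply pow2_ge_0.
  nra.
Qed.

Lemma inv_frob_ge_inv_trace_sq g M : posdef3 g -> symmetric3 M ->
  inv_frob g M >= / 3 * inv_trace g M ^ 2.
Proof.
  intros Hg HM. destruct (posdef3_inv3_factor g Hg) as [Q HQ].
  rewrite (inv_frob_conj g Q M HQ), (inv_trace_conj g Q M HQ).
  now apply symmetric3_sq_ge_trace_sq, mx_conj_symmetric.
Qed.

Lemma inv_frob_nonneg g M : posdef3 g -> 0 <= inv_frob g M.
Proof.
  intros Hg. destruct (posdef3_inv3_factor g Hg) as [Q HQ].
  rewrite (inv_frob_conj g Q M HQ). apply sum3_sq_nonneg.
Qed.

Lemma inv3_quad3_nonneg g v : posdef3 g -> 0 <= quad3 (inv3 g) v.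
Proof.
  intros Hg. destruct (posdef3_inv3_factor g Hg) as [Q HQ].
  replace (quad3 (inv3 g) v) with (sum3 (fun a => sum3 (fun i => Q i a * v i) ^ 2)).
  - unfold sum3 at 1. repeat apply Rplus_le_le_0_compat; apply pow2_ge_0.
  - unfold quad3. expand3. rewrite !HQ by lia. expand3. ring.
Qed.

(** * The sign of the scalar curvature *)

Definition nsym (C : SC) : Mat := fun i j => (bianchi_n C i j + bianchi_n C j i) / 2.
Definition mx_mul (A B : Mat) : Mat := fun i j => sum3 (fun k => A i k * B k j).
Definition dot3 (x y : Vec) : R := sum3 (fun i => x i * y i).
Definition bil3 (m : Mat) (x y : Vec) : R := sum3 (fun i => sum3 (fun j => m i j * x i * y j)).
Definition cross3 (x y : Vec) : Vec :=
  v3 (x 1%nat * y 2%nat - x 2%nat * y 1%nat) (x 2%nat * y 0%nat - x 0%nat * y 2%nat)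
     (x 0%nat * y 1%nat - x 1%nat * y 0%nat).

Definition tr_sq_defect (m : Mat) : R :=
  sum3 (fun i => sum3 (fun j => m i j * m j i)) - / 2 * sum3 (fun i => m i i) ^ 2.

Lemma asym_diag_0 (r : R) : r = - r -> r = 0.
Proof. lra. Qed.

Ltac antisym_diag HC k i := rewrite ?(asym_diag_0 _ (HC k i i ltac:(lia) ltac:(lia) ltac:(lia))).
Ltac antisym_off HC k := rewrite ?(HC k 1%nat 0%nat), ?(HC k 2%nat 0%nat), ?(HC k 2%nat 1%nat) by lia.
Ltac antisym3 HC :=
  antisym_diag HC 0%nat 0%nat; antisym_diag HC 0%nat 1%nat; antisym_diag HC 0%nat 2%nat;
  antisym_diag HC 1%nat 0%nat; antisym_diag HC 1%nat 1%nat; antisym_diag HC 1%nat 2%nat;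
  antisym_diag HC 2%nat 0%nat; antisym_diag HC 2%nat 1%nat; antisym_diag HC 2%nat 2%nat;
  antisym_off HC 0%nat; antisym_off HC 1%nat; antisym_off HC 2%nat.

Lemma Rscal_eq C s :
  (forall k i j, (k < 3)%nat -> (i < 3)%nat -> (j < 3)%nat -> C k i j = - C k j i) ->
  symmetric3 (sg s) -> det3 (sg s) <> 0 ->
  Rscal C s = - tr_sq_defect (mx_mul (sg s) (nsym C)) / det3 (sg s)
              - 6 * quad3 (inv3 (sg s)) (bianchi_a C).
Proof.
  intros HC Hs Hd.
  unfold Rscal, Ric, gam, gi, tr_sq_defect, mx_mul, nsym, bianchi_n, bianchi_a, quad3, inv3.
  unfold det3 in *. expand3. antisym3 HC. sym3 Hs. sym3_in Hs Hd.
  field. exact Hd.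
Qed.

(* The right-hand side is [tr_sq_defect m] computed in the orthonormal frame
   [w / |w|, p / |p|, q / |q|]. *)
Lemma tr_sq_defect_frame m w a :
  symmetric3 m ->
  let p := cross3 w a in let q := cross3 w p in
  dot3 w w <> 0 -> dot3 p p <> 0 -> dot3 q q <> 0 ->
  tr_sq_defect m =
    (bil3 m w w / dot3 w w) ^ 2 + (bil3 m p p / dot3 p p) ^ 2 + (bil3 m q q / dot3 q q) ^ 2
    + 2 * (bil3 m w p ^ 2 / (dot3 w w * dot3 p p) + bil3 m w q ^ 2 / (dot3 w w * dot3 q q)
           + bil3 m p q ^ 2 / (dot3 p p * dot3 q q))
    - / 2 * (bil3 m w w / dot3 w w + bil3 m p p / dot3 p p + bil3 m q q / dot3 q q) ^ 2.
Proof.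
  intros Hs p q Hw Hp Hq. subst p q.
  unfold tr_sq_defect, bil3, dot3, cross3, v3 in *. expand3. sym3 Hs.
  field. auto.
Qed.

Lemma dot3_self_pos w : nonzero3 w -> 0 < dot3 w w.
Proof.
  intros [k [Hk Hw]]. unfold dot3. expand3.
  assert (0 < w k * w k) by nra.
  pose proof (Rle_0_sqr (w 0%nat)); pose proof (Rle_0_sqr (w 1%nat)); pose proof (Rle_0_sqr (w 2%nat)).
  unfold Rsqr in *. destruct3 k; lra.
Qed.

Lemma cross3_nonzero w : nonzero3 w -> exists a, nonzero3 (cross3 w a).
Proof.
  intros [k [Hk Hw]]. destruct3 k.
  - exists (v3 0 1 0). exists 2%nat. split; [lia|]. unfold cross3, v3. simpl. lra.
  - exists (v3 0 0 1). exists 0%nat. split; [lia|]. unfold cross3, v3. simpl. lra.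
  - exists (v3 1 0 0). exists 1%nat. split; [lia|]. unfold cross3, v3. simpl. lra.
Qed.

(* Lagrange's identity, using [w . (w x a) = 0]. *)
Lemma dot3_cross3_cross3 w a :
  dot3 (cross3 w (cross3 w a)) (cross3 w (cross3 w a)) = dot3 w w * dot3 (cross3 w a) (cross3 w a).
Proof. unfold dot3, cross3, v3. expand3. ring. Qed.

Lemma tr_sq_defect_nonneg m w : symmetric3 m -> nonzero3 w -> quad3 m w = 0 -> 0 <= tr_sq_defect m.
Proof.
  intros Hs Hw Hmw. destruct (cross3_nonzero w Hw) as [a Ha].
  pose proof (dot3_self_pos w Hw) as Pw. pose proof (dot3_self_pos _ Ha) as Pp.
  set (p := cross3 w a) in *. set (q := cross3 w p).
  assert (Pq : 0 < dot3 q q) by (unfold q, p; rewrite dot3_cross3_cross3; now apply Rmult_lt_0_compat).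
  pose proof (tr_sq_defect_frame m w a Hs) as Hframe. cbv zeta in Hframe. fold p q in Hframe.
  rewrite Hframe by lra.
  change (bil3 m w w) with (quad3 m w). rewrite Hmw.
  set (u := bil3 m p p / dot3 p p). set (v := bil3 m q q / dot3 q q).
  assert (Hfrac : forall X d d', 0 < d -> 0 < d' -> 0 <= X ^ 2 / (d * d')).
  { intros X d d' Hd Hd'. apply Rmult_le_pos; [apply pow2_ge_0|].
    apply Rlt_le, Rinv_0_lt_compat, Rmult_lt_0_compat; auto. }
  pose proof (Hfrac (bil3 m w p) _ _ Pw Pp). pose proof (Hfrac (bil3 m w q) _ _ Pw Pq).
  pose proof (Hfrac (bil3 m p q) _ _ Pp Pq). pose proof (pow2_ge_0 (u - v)).
  replace (0 / dot3 w w) with 0 by (field; lra). nra.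
Qed.

Lemma tr_sq_defect_similar g E n : (forall i j, (i < 3)%nat -> (j < 3)%nat -> g i j = gram E i j) ->
  tr_sq_defect (mx_mul g n) = tr_sq_defect (mx_conj (fun i a => E a i) n).
Proof. intros HE. unfold tr_sq_defect, mx_mul, mx_conj. expand3. rewrite !HE by lia. unfold gram. expand3. ring. Qed.

Lemma nsym_symmetric C : symmetric3 (nsym C).
Proof. intros i j _ _. unfold nsym. lra. Qed.

Lemma quad3_nsym C x : quad3 (bianchi_n C) x = quad3 (nsym C) x.
Proof. unfold quad3, nsym. expand3. field. Qed.

Lemma quad3_mx_conj Q m w : quad3 (mx_conj Q m) w = quad3 m (fun i => sum3 (fun a => Q i a * w a)).
Proof. unfold quad3, mx_conj. expand3. ring. Qed.

Lemma tr_sq_defect_nsym_nonneg C g v : posdef3 g -> nonzero3 v -> quad3 (nsym C) v = 0 ->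
  0 <= tr_sq_defect (mx_mul g (nsym C)).
Proof.
  intros Hp Hv Hq. destruct (posdef3_gram g Hp) as [E [HE Hd]].
  rewrite (tr_sq_defect_similar g E _ HE).
  set (w := fun a => sum3 (fun i => inv3 E i a * v i)).
  assert (Hw : forall k, (k < 3)%nat -> sum3 (fun a => E a k * w a) = v k).
  { intros k Hk. pose proof (inv3_mul_l E ltac:(lra)) as HI.
    transitivity (sum3 (fun i => v i * sum3 (fun a => inv3 E i a * E a k))).
    { unfold w. expand3. ring. }
    unfold sum3 at 1. rewrite !HI by lia. destruct3 k; cbn; ring. }
  apply (tr_sq_defect_nonneg _ w (mx_conj_symmetric _ _ (nsym_symmetric C))).
  - destruct (nonzero3_dec w) as [Hn|[h0 [h1 h2]]]; [exact Hn|].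
    exfalso. destruct Hv as [k [Hk Hvk]]. apply Hvk. rewrite <- (Hw k Hk). expand3. rewrite h0, h1, h2. ring.
  - rewrite quad3_mx_conj, <- Hq. apply quad3_ext. exact Hw.
Qed.

Definition jacobi_012 (C : SC) (m : nat) : R :=
  sum3 (fun l => C l 0%nat 1%nat * C m l 2%nat + C l 1%nat 2%nat * C m l 0%nat + C l 2%nat 0%nat * C m l 1%nat).

Lemma quad3_nsym_a C :
  (forall k i j, (k < 3)%nat -> (i < 3)%nat -> (j < 3)%nat -> C k i j = - C k j i) ->
  quad3 (nsym C) (bianchi_a C) = / 2 * sum3 (fun m => bianchi_a C m * jacobi_012 C m).
Proof. intros HC. unfold quad3, nsym, bianchi_n, bianchi_a, jacobi_012. expand3. antisym3 HC. field. Qed.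

Lemma isotropic_of_indefinite (n : Mat) x y : symmetric3 n -> nonzero3 x -> nonzero3 y ->
  quad3 n x <= 0 -> 0 <= quad3 n y -> exists v, nonzero3 v /\ quad3 n v = 0.
Proof.
  intros Hs Hx Hy Hqx Hqy.
  destruct (Req_dec (quad3 n x) 0) as [E|E]; [exists x; auto|].
  destruct (Req_dec (quad3 n y) 0) as [F|F]; [exists y; auto|].
  set (qx := quad3 n x) in *. set (qy := quad3 n y) in *.
  set (B := bil3 n x y).
  set (s := sqrt (B * B - qx * qy)).
  assert (Hs2 : s * s = B * B - qx * qy) by (apply sqrt_sqrt; nra).
  set (lam := (- B + s) / qy).
  set (z := fun i => x i + lam * y i).
  assert (Hz : quad3 n z = qx + 2 * lam * B + lam * lam * qy).
  { unfold z, qx, qy, B, quad3, bil3. expand3. sym3 Hs. ring. }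
  assert (Hl : qy * lam = s - B) by (unfold lam; field; lra).
  exists z. split.
  - destruct (nonzero3_dec z) as [Hn|[h0 [h1 h2]]]; [exact Hn|]. exfalso.
    assert (Hxy : qx = lam * lam * qy).
    { unfold qx, qy, quad3. unfold z in h0, h1, h2. expand3.
      replace (x 0%nat) with (- lam * y 0%nat) by lra.
      replace (x 1%nat) with (- lam * y 1%nat) by lra.
      replace (x 2%nat) with (- lam * y 2%nat) by lra. ring. }
    nra.
  - rewrite Hz.
    assert (lam * (s + B) = - qx).
    { apply (Rmult_eq_reg_r qy); [|lra].
      replace (lam * (s + B) * qy) with ((qy * lam) * (s + B)) by ring. rewrite Hl. nra. }
    nra.
Qed.

(* Class B ([a <> 0]): by the Jacobi identity [a] is a null vector of [n]; class A: [n] is not definite. *)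
Lemma bianchi_I_VIII_isotropic C : bianchi_I_VIII C -> exists v, nonzero3 v /\ quad3 (nsym C) v = 0.
Proof.
  intros [[HC HJ] HIX].
  destruct (classic (forall i, (i < 3)%nat -> bianchi_a C i = 0)) as [Ha|Ha].
  - assert (Hnd : ~ definite3 (bianchi_n C)) by (intro D; apply HIX; split; auto).
    apply not_or_and in Hnd. destruct Hnd as [N1 N2].
    apply not_all_ex_not in N1. destruct N1 as [x Hx].
    apply not_all_ex_not in N2. destruct N2 as [y Hy].
    apply imply_to_and in Hx. apply imply_to_and in Hy.
    destruct Hx as [Hx Hqx]. destruct Hy as [Hy Hqy].
    rewrite quad3_nsym in Hqx, Hqy.
    apply (isotropic_of_indefinite _ x y (nsym_symmetric C) Hx Hy); lra.
  - exists (bianchi_a C). split.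
    + apply not_all_ex_not in Ha. destruct Ha as [i Hi]. apply imply_to_and in Hi.
      exists i. tauto.
    + rewrite quad3_nsym_a by exact HC.
      assert (J0 : jacobi_012 C 0%nat = 0) by (apply (HJ 0%nat 1%nat 2%nat 0%nat); lia).
      assert (J1 : jacobi_012 C 1%nat = 0) by (apply (HJ 0%nat 1%nat 2%nat 1%nat); lia).
      assert (J2 : jacobi_012 C 2%nat = 0) by (apply (HJ 0%nat 1%nat 2%nat 2%nat); lia).
      unfold sum3. rewrite J0, J1, J2. ring.
Qed.

Lemma Rscal_nonpos C s : bianchi_I_VIII C -> posdef3 (sg s) -> Rscal C s <= 0.
Proof.
  intros HB Hp. pose proof (posdef3_det_pos _ Hp) as Hd.
  destruct (bianchi_I_VIII_isotropic C HB) as [v [Hv Hq]].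
  destruct HB as [[HC _] _].
  rewrite Rscal_eq by (destruct Hp; auto; lra).
  pose proof (tr_sq_defect_nsym_nonneg C (sg s) v Hp Hv Hq).
  pose proof (inv3_quad3_nonneg (sg s) (bianchi_a C) Hp).
  assert (0 <= tr_sq_defect (mx_mul (sg s) (nsym C)) / det3 (sg s)) by (apply Rmult_le_pos; [lra|apply Rlt_le, Rinv_0_lt_compat; lra]).
  lra.
Qed.

(** * Calculus on [0, T) *)

(* Extending [f] affinely to the left of [0] turns the one-sided derivative at [0]
   into a two-sided one, so that Stdlib's [derivable_pt_lim] calculus applies. *)
Definition extend_left (f f' : R -> R) (t : R) : R := if Rlt_dec t 0 then f 0 + t * f' 0 else f t.

Lemma extend_left_eq T f f' t : in_dom T t -> extend_left f f' t = f t.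
Proof. intros [H _]. unfold extend_left. destruct (Rlt_dec t 0); [lra|reflexivity]. Qed.

Lemma in_dom_interval T t c : in_dom T t -> 0 <= c <= t -> in_dom T c.
Proof. intros [_ HT] Hc. split; [lra|]. destruct T; auto; lra. Qed.

Lemma in_dom_right_nbhd T t : in_dom T t ->
  exists r, 0 < r /\ forall h, Rabs h < r -> 0 <= t + h -> in_dom T (t + h).
Proof.
  intros [H0 HT]. destruct T as [T'|].
  - exists (T' - t). split; [lra|]. intros h Hh Hp. split; [lra|]. apply Rabs_def2 in Hh. lra.
  - exists 1. split; [lra|]. intros h Hh Hp. split; [lra|exact I].
Qed.

Lemma deriv_on_derivable_pt_lim T f f' : deriv_on T f f' ->
  forall t, in_dom T t -> derivable_pt_lim (extend_left f f') t (f' t).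
Proof.
  intros HD t Ht eps Heps.
  destruct (HD t Ht eps Heps) as [d [Hd Hh]].
  destruct (in_dom_right_nbhd T t Ht) as [r [Hr Hnbhd]].
  destruct (Rle_lt_or_eq_dec 0 t (proj1 Ht)) as [Tp|T0].
  - assert (Hm : 0 < Rmin d (Rmin r t)) by (repeat apply Rmin_pos; lra).
    exists (mkposreal _ Hm). intros h Hh0 Hhm. simpl in Hhm.
    apply Rabs_def2 in Hhm as [Hhm1 Hhm2].
    pose proof (Rmin_l d (Rmin r t)). pose proof (Rmin_r d (Rmin r t)).
    pose proof (Rmin_l r t). pose proof (Rmin_r r t).
    assert (Hdom : in_dom T (t + h)) by (apply Hnbhd; [apply Rabs_def1|]; lra).
    rewrite (extend_left_eq T f f' (t + h) Hdom), (extend_left_eq T f f' t Ht).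
    apply Hh; auto. apply Rabs_def1; lra.
  - subst t.
    assert (Hm : 0 < Rmin d r) by (apply Rmin_pos; lra).
    exists (mkposreal _ Hm). intros h Hh0 Hhm. simpl in Hhm.
    apply Rabs_def2 in Hhm as [Hhm1 Hhm2].
    pose proof (Rmin_l d r). pose proof (Rmin_r d r).
    rewrite (extend_left_eq T f f' 0 Ht).
    destruct (Rlt_dec (0 + h) 0) as [Hn|Hn].
    + unfold extend_left at 1. destruct (Rlt_dec (0 + h) 0); [|contradiction].
      replace ((f 0 + (0 + h) * f' 0 - f 0) / h - f' 0) with 0 by (field; auto).
      rewrite Rabs_R0; lra.
    + assert (Hdom : in_dom T (0 + h)) by (apply Hnbhd; [apply Rabs_def1|]; lra).
      rewrite (extend_left_eq T f f' (0 + h) Hdom). apply Hh; auto. apply Rabs_def1; lra.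
Qed.

Lemma deriv_on_of_derivable_pt_lim T f f' F : (forall t, in_dom T t -> F t = f t) ->
  (forall t, in_dom T t -> derivable_pt_lim F t (f' t)) -> deriv_on T f f'.
Proof.
  intros HF HD t Ht eps Heps. destruct (HD t Ht eps Heps) as [d Hd].
  exists d. split; [apply cond_pos|]. intros h Hh0 Hh Hdom.
  rewrite <- (HF _ Hdom), <- (HF _ Ht). apply Hd; auto.
Qed.

Lemma deriv_on_ext T f f1 f2 : deriv_on T f f1 -> (forall t, in_dom T t -> f1 t = f2 t) -> deriv_on T f f2.
Proof.
  intros H E t Ht eps Heps. destruct (H t Ht eps Heps) as [d [Hd Hh]].
  exists d. split; auto. intros h H1 H2 H3. rewrite <- (E t Ht). apply Hh; auto.
Qed.

Section DerivRules.
Variables (T : option R) (f f' g g' : R -> R).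
Hypotheses (Hf : deriv_on T f f') (Hg : deriv_on T g g').

Let Ef t (Ht : in_dom T t) := extend_left_eq T f f' t Ht.
Let Eg t (Ht : in_dom T t) := extend_left_eq T g g' t Ht.

Lemma deriv_on_plus : deriv_on T (fun t => f t + g t) (fun t => f' t + g' t).
Proof.
  apply (deriv_on_of_derivable_pt_lim T _ _ (plus_fct (extend_left f f') (extend_left g g'))).
  - intros t Ht. unfold plus_fct. now rewrite Ef, Eg.
  - intros t Ht. apply derivable_pt_lim_plus; now apply (deriv_on_derivable_pt_lim T).
Qed.

Lemma deriv_on_minus : deriv_on T (fun t => f t - g t) (fun t => f' t - g' t).
Proof.
  apply (deriv_on_of_derivable_pt_lim T _ _ (minus_fct (extend_left f f') (extend_left g g'))).
  - intros t Ht. unfold minus_fct. now rewrite Ef, Eg.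
  - intros t Ht. apply derivable_pt_lim_minus; now apply (deriv_on_derivable_pt_lim T).
Qed.

Lemma deriv_on_mult : deriv_on T (fun t => f t * g t) (fun t => f' t * g t + f t * g' t).
Proof.
  apply (deriv_on_of_derivable_pt_lim T _ _ (mult_fct (extend_left f f') (extend_left g g'))).
  - intros t Ht. unfold mult_fct. now rewrite Ef, Eg.
  - intros t Ht. pose proof (derivable_pt_lim_mult _ _ t _ _
      (deriv_on_derivable_pt_lim T f f' Hf t Ht) (deriv_on_derivable_pt_lim T g g' Hg t Ht)) as H.
    now rewrite Ef, Eg in H.
Qed.

Lemma deriv_on_div : (forall t, in_dom T t -> g t <> 0) ->
  deriv_on T (fun t => f t / g t) (fun t => (f' t * g t - g' t * f t) / (g t)²).
Proof.
  intros Hn. apply (deriv_on_of_derivable_pt_lim T _ _ (div_fct (extend_left f f') (extend_left g g'))).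
  - intros t Ht. unfold div_fct. now rewrite Ef, Eg.
  - intros t Ht. assert (extend_left g g' t <> 0) by (rewrite Eg; auto).
    pose proof (derivable_pt_lim_div _ _ t _ _ (deriv_on_derivable_pt_lim T f f' Hf t Ht)
      (deriv_on_derivable_pt_lim T g g' Hg t Ht) H) as H'.
    now rewrite Ef, Eg in H'.
Qed.

End DerivRules.

Lemma deriv_on_nonneg_mono T f f' : deriv_on T f f' -> (forall t, in_dom T t -> 0 <= f' t) ->
  forall t, in_dom T t -> f 0 <= f t.
Proof.
  intros HD Hp t Ht. destruct (proj1 Ht) as [Tp|T0]; [|subst; lra].
  destruct (MVT_cor2 (extend_left f f') f' 0 t Tp) as [c [Hc1 Hc2]].
  { intros c Hc. apply (deriv_on_derivable_pt_lim T); auto. apply (in_dom_interval T t); auto. }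
  assert (H0 : in_dom T 0) by (apply (in_dom_interval T t); auto; lra).
  rewrite (extend_left_eq T f f' t Ht), (extend_left_eq T f f' 0 H0) in Hc1.
  assert (0 <= f' c) by (apply Hp, (in_dom_interval T t); auto; lra).
  assert (0 <= f' c * (t - 0)) by (apply Rmult_le_pos; lra). lra.
Qed.

Lemma deriv_on_stays_below T f f' c : deriv_on T f f' -> f 0 < c ->
  (forall t, in_dom T t -> f t <> c) -> forall t, in_dom T t -> f t < c.
Proof.
  intros HD H0 Hn t Ht. destruct (Rlt_or_le (f t) c) as [|Hge]; auto. exfalso.
  assert (Hgt : c < f t) by (destruct Hge; auto; exfalso; now apply (Hn t Ht)).
  destruct (proj1 Ht) as [Tp|T0]; [|subst; lra].
  assert (Hd0 : in_dom T 0) by (apply (in_dom_interval T t); auto; lra).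
  set (F := fun s => extend_left f f' s - c).
  destruct (IVT_interv F 0 t) as [z [Hz1 Hz2]]; auto.
  - intros a Ha. apply continuity_pt_minus; [|apply continuity_pt_const; now intros ? ?].
    apply derivable_continuous_pt. exists (f' a). apply (deriv_on_derivable_pt_lim T); auto.
    apply (in_dom_interval T t); auto.
  - unfold F. rewrite (extend_left_eq T) by auto. lra.
  - unfold F. rewrite (extend_left_eq T) by auto. lra.
  - unfold F in Hz2. rewrite (extend_left_eq T) in Hz2 by (apply (in_dom_interval T t); auto).
    apply (Hn z); [apply (in_dom_interval T t); auto|lra].
Qed.

(** * Evolution of the mean curvature *)

Ltac deriv_on_expand Dg DK :=
  match goal with
  | |- deriv_on _ (fun t => @?A t + @?B t) _ => eapply deriv_on_plus
  | |- deriv_on _ (fun t => @?A t - @?B t) _ => eapply deriv_on_minus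
  | |- deriv_on _ (fun t => @?A t * @?B t) _ => eapply deriv_on_mult
  | |- deriv_on _ (fun t => @?A t / @?B t) _ => eapply deriv_on_div
  | _ => first [apply Dg | apply DK]; lia
  end.

(* Along [g' = -2 K], [(g^-1)' = 2 g^-1 K g^-1]. *)
Lemma deriv_on_inv_trace T (g K K' : R -> Mat) :
  (forall i j, (i < 3)%nat -> (j < 3)%nat -> deriv_on T (fun t => g t i j) (fun t => - 2 * K t i j)) ->
  (forall i j, (i < 3)%nat -> (j < 3)%nat -> deriv_on T (fun t => K t i j) (fun t => K' t i j)) ->
  (forall t, in_dom T t -> symmetric3 (g t) /\ symmetric3 (K t) /\ det3 (g t) <> 0) ->
  deriv_on T (fun t => inv_trace (g t) (K t))
    (fun t => 2 * inv_frob (g t) (K t) + inv_trace (g t) (K' t)).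
Proof.
  intros Dg DK Hsym. eapply deriv_on_ext.
  - unfold inv_trace, inv3, det3. expand3. repeat deriv_on_expand Dg DK.
    all: intros t Ht; apply (Hsym t Ht).
  - intros t Ht. destruct (Hsym t Ht) as [Hs [HK Hd]].
    unfold inv_frob, inv_trace, inv3. unfold det3 in *. expand3. sym3 Hs. sym3 HK. sym3_in Hs Hd.
    unfold Rsqr. field. exact Hd.
Qed.

Lemma KK_inv_frob s : KK s = inv_frob (sg s) (sK s).
Proof. unfold KK, Kup, inv_frob, gi. expand3. ring. Qed.

Lemma inv_trace_self g : symmetric3 g -> det3 g <> 0 -> inv_trace g g = 3.
Proof. intros Hs Hd. unfold inv_trace, inv3; unfold det3 in *. expand3. sym3 Hs. sym3_in Hs Hd. field. exact Hd. Qed.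

Lemma inv_trace_tau s : symmetric3 (sg s) -> det3 (sg s) <> 0 -> inv_trace (sg s) (tauij s) = tau00 s.
Proof.
  intros Hs Hd. unfold inv_trace, tauij, tau00, quad3, gi, inv3; unfold det3 in *.
  expand3. sym3 Hs. sym3_in Hs Hd. field. exact Hd.
Qed.

Lemma inv_trace_T s : symmetric3 (sg s) -> det3 (sg s) <> 0 ->
  inv_trace (sg s) (Tij s) = 4 / 3 * srho s * quad3 (sg s) (su s) + srho s.
Proof.
  intros Hs Hd. unfold inv_trace, Tij, ulow, quad3, inv3; unfold det3 in *.
  expand3. sym3 Hs. sym3_in Hs Hd. field. exact Hd.
Qed.

Lemma inv_trace_KK s : symmetric3 (sg s) -> symmetric3 (sK s) -> det3 (sg s) <> 0 ->
  inv_trace (sg s) (fun i j => sum3 (fun l => Kmix s l j * sK s i l)) = KK s.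
Proof.
  intros Hs HK Hd. unfold inv_trace, KK, Kup, Kmix, gi, inv3; unfold det3 in *.
  expand3. sym3 Hs. sym3 HK. sym3_in Hs Hd. field. exact Hd.
Qed.

Lemma inv_trace_rhs_K C Lam s : inv_trace (sg s) (rhs_K C Lam s) =
  Rscal C s + Htr s ^ 2 - 2 * inv_trace (sg s) (fun i j => sum3 (fun l => Kmix s l j * sK s i l))
  - 8 * PI * (inv_trace (sg s) (tauij s) + inv_trace (sg s) (Tij s))
  + (4 * PI * (- T00 s + inv_trace (sg s) (Tij s)) - Lam) * inv_trace (sg s) (sg s).
Proof. unfold inv_trace, rhs_K, Rscal, Htr, gi. expand3. ring. Qed.

Lemma tau00_nonneg s : posdef3 (sg s) -> 0 <= tau00 s.
Proof.
  intros Hp. change (tau00 s) with (/ 2 * quad3 (sg s) (sE s) + / 4 * inv_frob (sg s) (sF s)).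
  pose proof (posdef3_quad3_nonneg _ (sE s) Hp). pose proof (inv_frob_nonneg _ (sF s) Hp). lra.
Qed.

Lemma T00_pos s : posdef3 (sg s) -> 0 < srho s -> 0 <= sTh00 s -> 0 < T00 s.
Proof.
  intros Hp Hr HTh. pose proof (posdef3_quad3_nonneg _ (su s) Hp).
  assert (Hu0 : 0 < u0 s) by (unfold u0; apply sqrt_lt_R0; lra).
  unfold T00, Thlow00. pose proof (pow_lt _ 2 Hu0).
  assert (0 < srho s * u0 s ^ 2) by (apply Rmult_lt_0_compat; lra). lra.
Qed.

Lemma dHtr_ge C Lam s : posdef3 (sg s) -> symmetric3 (sK s) -> 0 < srho s -> 0 <= sTh00 s ->
  constraint_C1 C Lam s ->
  2 * KK s + inv_trace (sg s) (rhs_K C Lam s) >= KK s - Lam.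
Proof.
  intros Hp HK Hr HTh HC1. pose proof (posdef3_det_pos _ Hp) as Hd.
  assert (Hs : symmetric3 (sg s)) by apply Hp.
  rewrite inv_trace_rhs_K, inv_trace_KK, inv_trace_tau, inv_trace_T, inv_trace_self by (auto; lra).
  unfold constraint_C1 in HC1.
  pose proof (tau00_nonneg s Hp). pose proof (T00_pos s Hp Hr HTh).
  pose proof (posdef3_quad3_nonneg _ (su s) Hp). pose proof PI_RGT_0.
  assert (0 <= PI * tau00 s) by (apply Rmult_le_pos; lra).
  assert (0 < PI * T00 s) by (apply Rmult_lt_0_compat; lra).
  assert (0 <= PI * (4 / 3 * srho s * quad3 (sg s) (su s) + srho s)).
  { apply Rmult_le_pos; [lra|]. assert (0 <= srho s * quad3 (sg s) (su s)) by (apply Rmult_le_pos; lra). lra. }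
  nra.
Qed.

Lemma KK_ge_Htr_sq s : posdef3 (sg s) -> symmetric3 (sK s) -> KK s >= / 3 * Htr s ^ 2.
Proof. intros Hp HK. rewrite KK_inv_frob. now apply inv_frob_ge_inv_trace_sq. Qed.

Lemma Htr_sq_gt C Lam s : bianchi_I_VIII C -> posdef3 (sg s) -> symmetric3 (sK s) ->
  0 < srho s -> 0 <= sTh00 s -> constraint_C1 C Lam s -> Htr s ^ 2 > 3 * Lam.
Proof.
  intros HB Hp HK Hr HTh HC1. unfold constraint_C1 in HC1.
  pose proof (Rscal_nonpos C s HB Hp). pose proof (KK_ge_Htr_sq s Hp HK).
  pose proof (tau00_nonneg s Hp). pose proof (T00_pos s Hp Hr HTh). pose proof PI_RGT_0.
  assert (0 <= PI * tau00 s) by (apply Rmult_le_pos; lra).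
  assert (0 < PI * T00 s) by (apply Rmult_lt_0_compat; lra).
  nra.
Qed.

Lemma deriv_on_Htr C Lam T x : solves_S C Lam T x ->
  (forall t, in_dom T t -> posdef3 (sg (x t)) /\ symmetric3 (sK (x t))) ->
  deriv_on T (fun t => Htr (x t)) (fun t => 2 * KK (x t) + inv_trace (sg (x t)) (rhs_K C Lam (x t))).
Proof.
  intros [HS _] Hpos. eapply deriv_on_ext.
  - apply (deriv_on_inv_trace T (fun t => sg (x t)) (fun t => sK (x t)) (fun t => rhs_K C Lam (x t)));
      try (intros i j Hi Hj; apply (HS i j Hi Hj)).
    intros t Ht. destruct (Hpos t Ht) as [Hp HK].
    pose proof (posdef3_det_pos _ Hp). repeat split; auto; [apply Hp|lra].
  - intros t Ht. now rewrite KK_inv_frob.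
Qed.

Theorem mainTheorem7 (C : SC) (Lam : R) (T : option R) (x : R -> State) :
  bianchi_I_VIII C ->
  0 < Lam ->
  match T with Some T' => 0 < T' | None => True end ->
  solves_S C Lam T x ->
  (forall t, in_dom T t ->
     posdef3 (sg (x t)) /\ symmetric3 (sK (x t)) /\ antisymmetric3 (sF (x t)) /\
     0 < srho (x t) /\ 0 <= se (x t) /\ 0 <= sTh00 (x t) /\
     constraint_C1 C Lam (x t) /\ constraint_C2 C (x t) /\ constraint_C3 C (x t) /\ constraint_C4 C (x t)) ->
  Htr (x 0) < 0 ->
  exists dH : R -> R,
    deriv_on T (fun t => Htr (x t)) dH /\
    forall t, in_dom T t ->
      dH t >= KK (x t) - Lam /\
      KK (x t) - Lam >= / 3 * Htr (x t) ^ 2 - Lam /\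
      / 3 * Htr (x t) ^ 2 - Lam >= 0 /\
      Htr (x 0) - Lam * t <= Htr (x t) /\
      Htr (x t) < - sqrt (3 * Lam).
Proof.
  intros HB HL HT HS Hall H0.
  set (dH := fun t => 2 * KK (x t) + inv_trace (sg (x t)) (rhs_K C Lam (x t))).
  assert (HD : deriv_on T (fun t => Htr (x t)) dH) by (apply deriv_on_Htr; [exact HS|intros t Ht; split; apply (Hall t Ht)]).
  exists dH. split; [exact HD|].
  assert (Hbounds : forall t, in_dom T t ->
    dH t >= KK (x t) - Lam /\ KK (x t) >= / 3 * Htr (x t) ^ 2 /\ Htr (x t) ^ 2 > 3 * Lam).
  { intros t Ht. destruct (Hall t Ht) as [Hp [HK [_ [Hr [_ [HTh [HC1 _]]]]]]].
    split; [|split]; eauto using dHtr_ge, KK_ge_Htr_sq, Htr_sq_gt. }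
  assert (Hmono : forall t, in_dom T t -> Htr (x 0) <= Htr (x t)).
  { apply (deriv_on_nonneg_mono T _ dH HD). intros t Ht.
    destruct (Hbounds t Ht) as [A [B D]]. lra. }
  set (r := sqrt (3 * Lam)).
  assert (Hr : r * r = 3 * Lam) by (apply sqrt_sqrt; lra).
  assert (Hr0 : 0 <= r) by apply sqrt_pos.
  assert (Hbelow : forall t, in_dom T t -> Htr (x t) < - r).
  { assert (Hd0 : in_dom T 0) by (split; [lra|destruct T; auto]).
    apply (deriv_on_stays_below T _ dH (- r) HD).
    - destruct (Hbounds 0 Hd0) as [_ [_ D]]. nra.
    - intros t Ht E. destruct (Hbounds t Ht) as [_ [_ D]]. rewrite E in D. nra. }
  intros t Ht. destruct (Hbounds t Ht) as [A [B D]].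
  pose proof (Hmono t Ht). pose proof (Hbelow t Ht).
  assert (0 <= Lam * t) by (apply Rmult_le_pos; [lra|apply Ht]).
  repeat split; lra.
Qed.
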